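(* Let $X$ be a primitive distance-regular graph of diameter $d\geq 2$ on $n$ vertices with degree $k$, and let $\alpha>0$. Suppose that for some $1\leq j\leq d-1$ we have $b_j\geq\alpha k$ and $c_{j+1}\geq\alpha k$. Then $D_{\min}(X)\geq \frac{\alpha}{d}n$.
   Context: A connected graph $X$ of diameter $d$ is distance-regular if there are integers $a_i,b_i,c_i$ ($0\le i\le d$) such that for all vertices $v,w$ with $\mathrm{dist}(v,w)=i$, $w$ has exactly $c_i$ neighbours at distance $i-1$, $a_i$ at distance $i$, $b_i$ at distance $i+1$ from $v$; $X$ is $k$-regular with $k=b_0$. It is primitive if for every $1\le i\le d$ the distance-$i$ graph (same vertices, $u\sim v$ iff $\mathrm{dist}(u,v)=i$) is connected. A vertex $x$ distinguishes $u,v$ if $\mathrm{dist}(x,u)\neq\mathrm{dist}(x,v)$; $D(u,v)$ is the number of vertices distinguishing $u,v$, and $D_{\min}(X)=\min_{u\neq v}D(u,v)$. *)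

From HB Require Import structures.
From mathcomp Require Import all_boot all_order all_algebra.
Set Implicit Arguments. Unset Strict Implicit. Unset Printing Implicit Defensive.

Section Graphs.
Variable T : finType.
Variable e : rel T.

Definition simple_graph : Prop := symmetric e /\ irreflexive e.

Definition connected_rel (r : rel T) : Prop := forall x y, connect r x y.

Fixpoint dist_le (n : nat) (x y : T) : bool :=
  if n is m.+1 then dist_le m x y || [exists z, dist_le m x z && e z y]
  else x == y.

(* graph distance: least n with dist_le n x y; (if y is unreachable from x
   this returns #|T|, but it is only used for connected graphs, where all
   distances are < #|T|) *)
Definition dist (x y : T) : nat := find (fun n => dist_le n x y) (iota 0 #|T|).

Definition diameter : nat := \max_(x : T) \max_(y : T) dist x y.

Definition distance_regular (a b c : nat -> nat) : Prop :=
  connected_rel e /\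
  forall v w : T, let i := dist v w in
    [/\ #|[set u | e w u & dist v u == i.-1]| = (if i is 0 then 0 else c i),
        #|[set u | e w u & dist v u == i]| = a i
      & #|[set u | e w u & dist v u == i.+1]| = b i].

Definition dist_graph (i : nat) : rel T := [rel x y | dist x y == i].

Definition primitive : Prop :=
  forall i, 1 <= i <= diameter -> connected_rel (dist_graph i).

Definition Dist (u v : T) : nat := #|[set x | dist x u != dist x v]|.

Definition Dmin : nat :=
  \big[minn/#|T|]_(p : T * T | p.1 != p.2) Dist p.1 p.2.

End Graphs.

From HB Require Import structures.
From mathcomp Require Import all_boot all_order all_algebra.
From mathcomp Require Import zify ring.
Set Implicit Arguments. Unset Strict Implicit. Unset Printing Implicit Defensive.

(* In a distance-regular graph, the three-term recurrence
   A A_s = b_(s-1) A_(s-1) + a_s A_s + c_(s+1) A_(s+1) for the distance matrices A_s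
   shows, by induction on s, that sum_z [d(x,z) = s] g(d(z,y)) depends only on d(x,y);
   hence so does D(x,y), and so does reachability of y from x within m steps of the
   distance-i graph.
   For adjacent w, w', summing D(w,u) over the k neighbours u of w and counting, for
   each vertex x, the neighbours u with d(x,u) <> d(x,w) gives
   k D(w,w') >= n min(b_j, c_(j+1)), since b is nonincreasing and c nondecreasing.
   If d(u,v) = i >= 1, the distance-i graph is connected by primitivity, and the set of
   distances of pairs joined by at most m of its steps grows strictly with m until it
   is all of {0..d}; so w, w' are joined by at most d such steps, and the triangle
   inequality for D gives D(w,w') <= d D(u,v). *)

Section DistanceRegular.
Variables (T : finType) (e : rel T) (a b c : nat -> nat).
Hypotheses (e_simple : simple_graph e) (e_drg : distance_regular e a b c).

Let e_sym : symmetric e. Proof. by case: e_simple. Qed.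
Let e_irr : irreflexive e. Proof. by case: e_simple. Qed.

Lemma dist_le_mono n m x y : n <= m -> dist_le e n x y -> dist_le e m x y.
Proof.
move=> /subnKC <-; elim: (m - n) => [|k IH] h; first by rewrite addn0.
by rewrite addnS /= IH.
Qed.

Lemma dist_le_path x p : path e x p -> dist_le e (size p) x (last x p).
Proof.
elim/last_ind: p => [|p z IH] /=; first by rewrite eqxx.
rewrite rcons_path size_rcons last_rcons => /andP [hp hz] /=.
by apply/orP; right; apply/existsP; exists (last x p); rewrite IH.
Qed.

Lemma dist_le_card x y : exists2 n, n < #|T| & dist_le e n x y.
Proof.
have /connectP [p hp ->] := e_drg.1 x y.
have [p' hp' uniq_p' _] := shortenP hp.
exists (size p'); last exact: dist_le_path.
by rewrite -ltnS -[(size p').+1]/(size (x :: p')) -(card_uniqP uniq_p') ltnS max_card.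
Qed.

Lemma dist_leE n x y : dist_le e n x y = (dist e x y <= n).
Proof.
pose P k := dist_le e k x y.
have has_P : has P (iota 0 #|T|).
  by have [m lt_m Pm] := dist_le_card x y; apply/hasP; exists m; rewrite ?mem_iota.
have lt_dist : dist e x y < #|T| by move: has_P; rewrite has_find size_iota.
have P_dist : P (dist e x y) by have := nth_find 0 has_P; rewrite nth_iota.
apply/idP/idP => [Pn|]; last by move/dist_le_mono; apply.
rewrite leqNgt; apply/negP => lt_n.
by have := before_find 0 lt_n; rewrite nth_iota ?Pn // (ltn_trans lt_n).
Qed.

Lemma dist_ltT x y : dist e x y < #|T|.
Proof. by have [n lt_n] := dist_le_card x y; rewrite dist_leE => /leq_ltn_trans; apply. Qed.

Lemma distxx x : dist e x x = 0.
Proof. by apply/eqP; rewrite -leqn0 -dist_leE /=. Qed.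

Lemma dist_eq0 x y : (dist e x y == 0) = (x == y).
Proof. by rewrite -leqn0 -dist_leE. Qed.

Lemma dist_edge x z y : e z y -> dist e x y <= (dist e x z).+1.
Proof.
move=> e_zy; rewrite -dist_leE /=; apply/orP; right; apply/existsP; exists z.
by rewrite e_zy dist_leE leqnn.
Qed.

Lemma dist_le_cons n x y z : e x y -> dist_le e n y z -> dist_le e n.+1 x z.
Proof.
move=> e_xy; elim: n z => [|n IH] z /=.
  by move=> /eqP <-; apply/orP; right; apply/existsP; exists x; rewrite eqxx.
case/orP => [/IH le_z|/existsP [w /andP [/IH le_w e_wz]]].
  by apply/orP; left.
by apply/orP; right; apply/existsP; exists w; apply/andP.
Qed.

Lemma dist_le_sym n x y : dist_le e n x y -> dist_le e n y x.
Proof.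
elim: n x y => [|n IH] x y /=; first by rewrite eq_sym.
case/orP => [/IH le_yx|/existsP [z /andP [/IH le_z e_zy]]].
  by apply/orP; left.
by apply: dist_le_cons le_z; rewrite e_sym.
Qed.

Lemma dist_sym x y : dist e x y = dist e y x.
Proof.
by apply/eqP; rewrite eqn_leq -!dist_leE; apply/andP; split; apply: dist_le_sym;
  rewrite dist_leE.
Qed.

Lemma dist_pred x y s : dist e x y = s.+1 -> exists2 z, dist e x z = s & e z y.
Proof.
move=> dxy; have := dist_leE s.+1 x y; rewrite dxy leqnn /=.
case/orP => [|/existsP [z /andP [le_xz e_zy]]]; first by rewrite dist_leE dxy ltnn.
exists z => //; apply/eqP; rewrite eqn_leq -dist_leE le_xz -ltnS -dxy.
exact: dist_edge.
Qed.

Lemma dist_eq1 x y : (dist e x y == 1) = e x y.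
Proof.
apply/eqP/idP => [/dist_pred [z /eqP] | e_xy].
  by rewrite dist_eq0 => /eqP ->.
have le1 : dist e x y <= 1 by have := dist_edge x e_xy; rewrite distxx.
have : dist e x y != 0 by rewrite dist_eq0; apply: contraTneq e_xy => ->; rewrite e_irr.
by case: (dist e x y) le1 => [|[]].
Qed.

Lemma dist_le_diameter x y : dist e x y <= diameter e.
Proof. exact: leq_trans (leq_bigmax y) (leq_bigmax (F := fun x => \max_y dist e x y) x). Qed.

Lemma sum_indicator (P Q : pred T) k :
  \sum_(w | P w) Q w * k = #|[set w | P w & Q w]| * k.
Proof.
rewrite -sum_nat_const big_mkcond [RHS]big_mkcond /=; apply: eq_bigr => w _.
by rewrite inE; case: (P w); case: (Q w); rewrite ?mul1n ?mul0n.
Qed.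

Lemma nat_fun_near (h : nat -> nat) m i : m <= i.+1 -> i <= m.+1 ->
  h m = ((m == i.-1) && (0 < i)) * h i.-1 + (m == i) * h i + (m == i.+1) * h i.+1.
Proof.
move=> le1 le2.
case: (eqVneq m i.-1) => [e1|n1]; case: (eqVneq m i) => [e2|n2];
  case: (eqVneq m i.+1) => [e3|n3]; case: (posnP i) => [i0|i_gt0];
  rewrite /= ?mul0n ?mul1n ?addn0 ?add0n;
  first [ by rewrite e1 | by rewrite e2 | by rewrite e3 | exfalso; lia ].
Qed.

Lemma sum_nbr_dist (h : nat -> nat) x z : let i := dist e z x in
  \sum_(w | e x w) h (dist e z w) =
  (if i is 0 then 0 else c i * h i.-1) + a i * h i + b i * h i.+1.
Proof.
move=> i; have [cardC cardA cardB] := e_drg.2 z x; rewrite -/i in cardC cardA cardB.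
rewrite (eq_bigr _ (fun w e_xw => nat_fun_near h (dist_edge z e_xw)
                                  (dist_edge z (etrans (e_sym w x) e_xw)))).
rewrite !big_split /= !sum_indicator cardA cardB; congr (_ + _ + _).
move: cardC; rewrite /i; case: (dist e z x) => [|s] cardC.
  by rewrite eq_card0 // => w; rewrite !inE ltnn !andbF.
by rewrite -cardC; congr (_ * _); apply: eq_card => w; rewrite !inE andbT.
Qed.

Lemma sum_nbr_sphere x z s :
  \sum_(w | e x w) (dist e z w == s) =
  (if s is s'.+1 then b s' * (dist e z x == s') else 0) + a s * (dist e z x == s)
  + c s.+1 * (dist e z x == s.+1).
Proof.
rewrite (sum_nbr_dist (fun t => (t == s) : nat)).
case: (dist e z x) => [|i]; case: s => [|s] /=; rewrite ?eqSS;
  repeat (case: eqP => ? /=); subst; rewrite ?muln0 ?muln1 ?addn0 ?add0n //; lia.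
Qed.

Definition sphere_conv s (g : nat -> nat) x y :=
  \sum_z (dist e x z == s) * g (dist e z y).

Lemma sum_nbr_sphere_conv s g x y :
  \sum_(w | e x w) sphere_conv s g w y =
  (if s is s'.+1 then b s' * sphere_conv s' g x y else 0) + a s * sphere_conv s g x y
  + c s.+1 * sphere_conv s.+1 g x y.
Proof.
rewrite /sphere_conv exchange_big /=.
transitivity (\sum_z (\sum_(w | e x w) (dist e z w == s)) * g (dist e z y)).
  by apply: eq_bigr => z _; rewrite big_distrl; apply: eq_bigr => w _; rewrite dist_sym.
case: s => [|s] /=; rewrite ?add0n !big_distrr -!big_split /=; apply: eq_bigr => z _;
  by rewrite sum_nbr_sphere (dist_sym z x) !mulnDl ?mul0n ?add0n !mulnA.
Qed.

Definition dist_invariant (R : Type) (F : T -> T -> R) :=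
  forall x y x' y', dist e x y = dist e x' y' -> F x y = F x' y'.

Definition dist_fun (R : Type) (r0 : R) (F : T -> T -> R) (t : nat) : R :=
  if [pick p : T * T | dist e p.1 p.2 == t] is Some p then F p.1 p.2 else r0.

Lemma dist_funE (R : Type) (r0 : R) F :
  dist_invariant F -> forall x y, F x y = dist_fun r0 F (dist e x y).
Proof.
move=> invF x y; rewrite /dist_fun; case: pickP => [p /eqP dp|/(_ (x, y))].
  by apply: invF; rewrite dp.
by rewrite /= eqxx.
Qed.

Lemma sum_nbr_invariant (G : T -> T -> nat) :
  dist_invariant G -> dist_invariant (fun x y => \sum_(w | e x w) G w y).
Proof.
move=> invG x y x' y' dxy.
have E u v : \sum_(w | e u w) G w v = \sum_(w | e u w) dist_fun 0 G (dist e v w).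
  by apply: eq_bigr => w _; rewrite (dist_funE 0 invG) dist_sym.
by rewrite !E !sum_nbr_dist (dist_sym y) (dist_sym y') dxy.
Qed.

Lemma sphere_conv0 g x y : sphere_conv 0 g x y = g (dist e x y).
Proof.
rewrite /sphere_conv (bigD1 x) //= distxx eqxx mul1n big1 ?addn0 // => z.
by rewrite dist_eq0 eq_sym => /negbTE ->.
Qed.

Lemma c_gt0 s x y : dist e x y = s.+1 -> 0 < c s.+1.
Proof.
move=> dxy; have [cardC _ _] := e_drg.2 x y; rewrite dxy /= in cardC.
have [z dxz e_zy] := dist_pred dxy.
by rewrite -cardC; apply/card_gt0P; exists z; rewrite inE e_sym e_zy dxz eqxx.
Qed.

Lemma sphere_conv_c0 s g x y : c s.+1 = 0 -> sphere_conv s.+1 g x y = 0.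
Proof.
move=> c0; rewrite /sphere_conv big1 // => z _.
by case: eqP => [/c_gt0|]; rewrite ?c0 ?mul0n.
Qed.

Lemma sphere_conv_invariantS s g :
  (if s is s'.+1 then dist_invariant (sphere_conv s' g) else True) ->
  dist_invariant (sphere_conv s g) -> dist_invariant (sphere_conv s.+1 g).
Proof.
move=> inv_pred inv_s x y x' y' dxy.
have rec := sum_nbr_sphere_conv s g x y.
rewrite (sum_nbr_invariant inv_s dxy) sum_nbr_sphere_conv (inv_s _ _ _ _ dxy) in rec.
have pred_eq : (if s is s'.+1 then b s' * sphere_conv s' g x y else 0) =
               (if s is s'.+1 then b s' * sphere_conv s' g x' y' else 0).
  by case: s inv_pred {inv_s rec} => // s inv_pred; rewrite (inv_pred _ _ _ _ dxy).
rewrite pred_eq in rec.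
case: (posnP (c s.+1)) => [c0|c_pos]; first by rewrite !sphere_conv_c0.
by apply/eqP; rewrite -(eqn_pmul2l c_pos) (addnI rec).
Qed.

Lemma sphere_conv_invariant s g : dist_invariant (sphere_conv s g).
Proof.
suff [] : dist_invariant (sphere_conv s g) /\ dist_invariant (sphere_conv s.+1 g) by [].
have inv0 : dist_invariant (sphere_conv 0 g).
  by move=> x y x' y' dxy; rewrite !sphere_conv0 dxy.
elim: s => [|s [inv_s inv_s1]]; split => //; exact: sphere_conv_invariantS.
Qed.

Lemma sum_ord_eq_mul n d (F : nat -> nat) : d < n -> \sum_(t < n) (d == t) * F t = F d.
Proof.
move=> lt_dn; have := big_ord1_eq addn F d n; rewrite lt_dn big_mkcond => <- /=.
by apply: eq_bigr => t _; rewrite eq_sym; case: eqP; rewrite ?mul1n.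
Qed.

Lemma sum_dist_invariant (h : nat -> nat -> nat) :
  dist_invariant (fun x y => \sum_z h (dist e x z) (dist e z y)).
Proof.
pose n := #|T|.
have E x y : \sum_z h (dist e x z) (dist e z y) =
    \sum_(s < n) \sum_(t < n) h s t * sphere_conv s (fun u => (u == t) : nat) x y.
  transitivity (\sum_z \sum_(s < n) \sum_(t < n)
                  h s t * ((dist e x z == s) * (dist e z y == t))).
    apply: eq_bigr => z _.
    rewrite -(sum_ord_eq_mul (fun s => h s (dist e z y)) (dist_ltT x z)).
    apply: eq_bigr => s _.
    rewrite -(sum_ord_eq_mul (fun t => h s t) (dist_ltT z y)) big_distrr /=.
    by apply: eq_bigr => t _; rewrite mulnA mulnC.
  rewrite exchange_big; apply: eq_bigr => s _ /=.
  by rewrite exchange_big; apply: eq_bigr => t _; rewrite big_distrr.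
move=> x y x' y' dxy; rewrite !E; apply: eq_bigr => s _; apply: eq_bigr => t _.
by rewrite (sphere_conv_invariant _ _ dxy).
Qed.

Lemma Dist_invariant : dist_invariant (Dist e).
Proof.
have E x y : Dist e x y = \sum_z (dist e x z != dist e z y).
  by rewrite /Dist -sum1dep_card big_mkcond; apply: eq_bigr => z _; rewrite dist_sym; case: ifP.
by move=> x y x' y' dxy; rewrite !E (sum_dist_invariant (fun s t => (s != t) : nat) dxy).
Qed.

Lemma Dist_triangle x z y : Dist e x y <= Dist e x z + Dist e z y.
Proof.
rewrite /Dist; apply: leq_trans (leq_card_setU _ _); apply: subset_leq_card.
apply/subsetP => w; rewrite !inE.
by case: (eqVneq (dist e w x) (dist e w z)) => [->|].
Qed.

Lemma dist_descend x y t : t <= dist e x y -> exists y', dist e x y' = t.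
Proof.
suff : forall n y, dist e x y = n -> t <= n -> exists y', dist e x y' = t by apply.
elim=> [|n IH] z dxz.
  by rewrite leqn0 => /eqP ->; exists z.
rewrite leq_eqVlt => /orP [/eqP ->|]; first by exists z.
rewrite ltnS; have [w dxw _] := dist_pred dxz; exact: IH dxw.
Qed.

Lemma dist_realized t : 0 < diameter e -> t <= diameter e -> exists x y, dist e x y = t.
Proof.
move=> d_gt0; have T_gt0 : 0 < #|T|.
  by rewrite lt0n; apply: contraTneq d_gt0 => /card0_eq T0; rewrite /diameter big_pred0.
have [x dx] := eq_bigmax (fun x => \max_y dist e x y) T_gt0.
have [y dy] := eq_bigmax (fun y => dist e x y) T_gt0.
rewrite /diameter dx dy => /dist_descend [y' dxy']; by exists x, y'.
Qed.

Lemma existsb_sum_gt0 (P : pred T) : [exists z, P z] = (0 < \sum_z P z).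
Proof.
rewrite lt0n sum_nat_eq0 negb_forall; apply: eq_existsb => z.
by case: (P z).
Qed.

Section ReachInDistanceGraph.
Variable i : nat.

Fixpoint reach m x y : bool :=
  if m is m'.+1 then reach m' x y || [exists z, reach m' x z && (dist e z y == i)]
  else x == y.

Lemma reach_invariant m : dist_invariant (reach m).
Proof.
elim: m => [|m IH] x y x' y' dxy /=.
  by apply/eqP/eqP => [xy|x'y']; apply/eqP; rewrite -dist_eq0;
    [rewrite -dxy xy | rewrite dxy x'y']; rewrite distxx.
rewrite (IH _ _ _ _ dxy); congr (_ || _).
pose h s t := dist_fun false (reach m) s * (t == i).
have E u v : [exists z, reach m u z && (dist e z v == i)] =
             (0 < \sum_z h (dist e u z) (dist e z v)).
  by rewrite existsb_sum_gt0; congr (0 < _); apply: eq_bigr => z _;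
    rewrite /h -mulnb -(dist_funE false IH).
by rewrite !E (sum_dist_invariant h dxy).
Qed.

Lemma connect_reach x y : connect (dist_graph e i) x y -> exists m, reach m x y.
Proof.
move=> /connectP [p p_path ->] {y}.
elim/last_ind: p p_path => [|p z IH] /=; first by exists 0; rewrite /= eqxx.
rewrite rcons_path last_rcons => /andP [/IH [m reach_m] dz].
by exists m.+1; apply/orP; right; apply/existsP; exists (last x p); apply/andP.
Qed.

Lemma Dist_reach m u v x y :
  dist e u v = i -> reach m x y -> Dist e x y <= m * Dist e u v.
Proof.
move=> duv; elim: m y => [|m IH] y /=.
  by move=> /eqP <-; rewrite leqn0 cards_eq0; apply/eqP/setP => w; rewrite !inE eqxx.
case/orP => [/IH le_m|/existsP [z /andP [/IH le_z /eqP dzy]]].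
  by apply: leq_trans le_m _; rewrite leq_mul2r leqnSn orbT.
apply: leq_trans (Dist_triangle x z y) _; rewrite mulSn addnC leq_add //.
by rewrite (@Dist_invariant z y u v) // dzy duv.
Qed.

Lemma reach_mono m n x y : m <= n -> reach m x y -> reach n x y.
Proof.
move=> /subnKC <-; elim: (n - m) => [|k IH]; first by rewrite addn0.
by rewrite addnS /= => /IH ->.
Qed.

Lemma reach_stable m : (forall x y, reach m.+1 x y = reach m x y) ->
  forall k x y, reach (m + k) x y = reach m x y.
Proof.
move=> stable_m; elim=> [|k IH] x y; first by rewrite addn0.
rewrite addnS -[RHS]stable_m /= IH; congr (_ || _).
by apply: eq_existsb => z; rewrite IH.
Qed.

Hypotheses (e_prim : primitive e) (i_range : 1 <= i <= diameter e).

Lemma reach_stable_total m : (forall x y, reach m.+1 x y = reach m x y) ->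
  forall x y, reach m x y.
Proof.
move=> stable_m x y; have [n reach_n] := connect_reach (e_prim i_range x y).
by rewrite -(reach_stable stable_m n); apply: reach_mono reach_n; rewrite leq_addl.
Qed.

Lemma dist_ltS_diameter x y : dist e x y < (diameter e).+1.
Proof. by rewrite ltnS dist_le_diameter. Qed.

Definition reach_dist m : {set 'I_(diameter e).+1} :=
  [set t : 'I_(diameter e).+1 | dist_fun false (reach m) t].

Lemma reach_distE m x y :
  reach m x y = (Ordinal (dist_ltS_diameter x y) \in reach_dist m).
Proof. by rewrite inE -(dist_funE false (reach_invariant m)). Qed.

Lemma reach_dist_card m : m <= diameter e -> m < #|reach_dist m|.
Proof.
have d_gt0 : 0 < diameter e by case/andP: i_range; apply: leq_trans.
elim: m => [_|m IH lt_md].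
  have [x [_ _]] := dist_realized d_gt0 (leq0n _).
  by apply/card_gt0P; exists (Ordinal (dist_ltS_diameter x x)); rewrite -reach_distE /=.
have [eq_m|neq_m] := eqVneq (reach_dist m.+1) (reach_dist m).
  suff -> : reach_dist m.+1 = setT by rewrite cardsT card_ord ltnS.
  apply/setP => t; rewrite eq_m in_setT.
  have [x [y dxy]] := dist_realized d_gt0 (ltnSE (ltn_ord t)).
  have -> : t = Ordinal (dist_ltS_diameter x y) by apply: val_inj; rewrite /= dxy.
  by rewrite -reach_distE reach_stable_total // => u v; rewrite !reach_distE eq_m.
apply: leq_ltn_trans (IH (ltnW lt_md)) (proper_card _).
rewrite properEneq eq_sym neq_m; apply/subsetP => t; rewrite !inE /dist_fun.
by case: pickP => // p _ /= ->.
Qed.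

Lemma reach_diameter x y : reach (diameter e) x y.
Proof.
have : reach_dist (diameter e) = setT.
  by apply/eqP; rewrite eqEcard subsetT cardsT card_ord reach_dist_card.
by rewrite reach_distE => ->; rewrite inE.
Qed.

End ReachInDistanceGraph.

Lemma dist_succ_nbr x y t : dist e x y = t.+1 -> exists2 x', e x x' & dist e x' y = t.
Proof.
rewrite dist_sym => /dist_pred [z dyz e_zx].
by exists z; rewrite 1?e_sym // dist_sym.
Qed.

Lemma b_leS t : t < diameter e -> b t.+1 <= b t.
Proof.
move=> lt_td; have [x [y dxy]] := dist_realized (leq_ltn_trans (leq0n t) lt_td) lt_td.
have [x' e_xx' dx'y] := dist_succ_nbr dxy.
have [_ _ card_b] := e_drg.2 x y; have [_ _ card_b'] := e_drg.2 x' y.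
rewrite dxy in card_b; rewrite dx'y in card_b'; rewrite -card_b -card_b'.
apply: subset_leq_card; apply/subsetP => u; rewrite !inE.
case/andP => e_yu /eqP dxu; rewrite e_yu eqn_leq.
have := dist_edge x' e_yu; rewrite dx'y => -> /=.
by rewrite -ltnS -dxu dist_sym [dist e x' u]dist_sym dist_edge // e_sym.
Qed.

Lemma c_leS t : 0 < t -> t < diameter e -> c t <= c t.+1.
Proof.
move=> t_gt0 lt_td; have [x [y dxy]] := dist_realized (leq_ltn_trans (leq0n t) lt_td) lt_td.
have [x' e_xx' dx'y] := dist_succ_nbr dxy.
have [card_c _ _] := e_drg.2 x y; have [card_c' _ _] := e_drg.2 x' y.
rewrite dxy in card_c; rewrite dx'y in card_c'.
case: t t_gt0 lt_td dxy dx'y card_c card_c' => // t _ _ dxy dx'y /= <- <-.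
apply: subset_leq_card; apply/subsetP => u; rewrite !inE.
case/andP => e_yu /eqP dx'u; rewrite e_yu /= eqn_leq.
apply/andP; split.
  by rewrite -dx'u dist_sym [dist e x' u]dist_sym dist_edge // e_sym.
by rewrite -ltnS -dxy dist_edge // e_sym.
Qed.

Lemma b_nonincreasing s t : s <= t -> t <= diameter e -> b t <= b s.
Proof.
move=> /subnKC <-; elim: (t - s) => [|k IH] le_d; first by rewrite addn0.
by rewrite addnS in le_d *; apply: leq_trans (b_leS le_d) (IH (ltnW le_d)).
Qed.

Lemma c_nondecreasing s t : 0 < s -> s <= t -> t <= diameter e -> c s <= c t.
Proof.
move=> s_gt0 /subnKC <-; elim: (t - s) => [|k IH] le_d; first by rewrite addn0.
rewrite addnS in le_d *; apply: leq_trans (IH (ltnW le_d)) (c_leS _ le_d).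
exact: leq_trans s_gt0 (leq_addr _ _).
Qed.

Lemma nbr_dist_neq_ge x w j : j < diameter e ->
  minn (b j) (c j.+1) <= #|[set u | e w u & dist e x w != dist e x u]|.
Proof.
move=> lt_jd; have [card_c _ card_b] := e_drg.2 x w.
have [le_sj|lt_js] := leqP (dist e x w) j.
  apply: leq_trans (geq_minl _ _) _.
  apply: leq_trans (b_nonincreasing le_sj (ltnW lt_jd)) _; rewrite -card_b.
  apply: subset_leq_card; apply/subsetP => u; rewrite !inE.
  by case/andP => -> /eqP ->; rewrite neq_ltn ltnSn.
apply: leq_trans (geq_minr _ _) _.
apply: leq_trans (c_nondecreasing (ltn0Sn _) lt_js (dist_le_diameter x w)) _.
move: card_c lt_js; case: (dist e x w) => // s <- _.
apply: subset_leq_card; apply/subsetP => u; rewrite !inE.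
by case/andP => -> /eqP ->; rewrite neq_ltn ltnSn orbT.
Qed.

Lemma Dist_edge_ge w w' j : e w w' -> j < diameter e ->
  #|T| * minn (b j) (c j.+1) <= b 0 * Dist e w w'.
Proof.
move=> e_ww' lt_jd.
have sum_nbr_Dist : \sum_(u | e w u) Dist e w u = b 0 * Dist e w w'.
  have [_ _ card_b] := e_drg.2 w w; rewrite distxx in card_b.
  rewrite -card_b -sum_indicator; apply: eq_big => // u e_wu.
  rewrite dist_eq1 e_wu mul1n; apply: Dist_invariant.
  by move: e_wu e_ww'; rewrite -!dist_eq1 => /eqP -> /eqP ->.
have double_count : \sum_(u | e w u) Dist e w u =
                    \sum_x #|[set u | e w u & dist e x w != dist e x u]|.
  rewrite /Dist; under eq_bigr do rewrite -sum1dep_card big_mkcond.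
  rewrite exchange_big /=; apply: eq_bigr => x _.
  by rewrite -[RHS]muln1 -sum_indicator; apply: eq_bigr => u _; case: ifP.
rewrite -sum_nbr_Dist double_count -sum_nat_const; apply: leq_sum => x _.
exact: nbr_dist_neq_ge.
Qed.

Lemma exists_edge : 0 < diameter e -> exists w w', e w w'.
Proof.
move=> d_gt0; have [w [w' /eqP]] := dist_realized d_gt0 d_gt0.
by rewrite dist_eq1; exists w, w'.
Qed.

Lemma b0_gt0 : 0 < diameter e -> 0 < b 0.
Proof.
move=> /exists_edge [w [w' e_ww']]; have [_ _ card_b] := e_drg.2 w w.
rewrite distxx in card_b; rewrite -card_b; apply/card_gt0P; exists w'.
by rewrite inE e_ww' dist_eq1.
Qed.

Lemma Dist_ge j u v : primitive e -> j < diameter e -> u != v ->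
  #|T| * minn (b j) (c j.+1) <= b 0 * diameter e * Dist e u v.
Proof.
move=> e_prim lt_jd neq_uv.
have [w [w' e_ww']] := exists_edge (leq_ltn_trans (leq0n j) lt_jd).
have duv_range : 1 <= dist e u v <= diameter e.
  by rewrite lt0n dist_eq0 neq_uv dist_le_diameter.
apply: leq_trans (Dist_edge_ge e_ww' lt_jd) _; rewrite -mulnA leq_mul2l.
by rewrite (Dist_reach erefl (reach_diameter e_prim duv_range w w')) orbT.
Qed.

End DistanceRegular.

Import Order.TTheory GRing.Theory Num.Theory.
Local Open Scope ring_scope.

Theorem proposition4p8 (R : realFieldType) (T : finType) (e : rel T)
    (a b c : nat -> nat) (alpha : R) (j : nat) :
  simple_graph e ->
  distance_regular e a b c ->
  primitive e ->
  (2 <= diameter e)%N ->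
  0 < alpha ->
  (1 <= j <= (diameter e).-1)%N ->
  alpha * (b 0%N)%:R <= (b j)%:R ->
  alpha * (b 0%N)%:R <= (c j.+1)%:R ->
  alpha / (diameter e)%:R * #|T|%:R <= (Dmin e)%:R.
Proof.
move=> e_simple e_drg e_prim d_ge2 _ /andP [_ le_j] le_bj le_cj.
set d := diameter e; have lt_jd : (j < d)%N by rewrite /d; lia.
have d_gt0 : (0 < d)%N by apply: leq_ltn_trans lt_jd.
have k_gt0 : (0 < (b 0)%:R :> R) by rewrite ltr0n (b0_gt0 e_simple e_drg d_gt0).
have le_min : alpha * (b 0)%:R <= (minn (b j) (c j.+1))%:R by rewrite /minn; case: ifP.
have Dist_bound u v : u != v -> alpha / d%:R * #|T|%:R <= (Dist e u v)%:R.
  move=> neq_uv; have := Dist_ge e_simple e_drg e_prim lt_jd neq_uv.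
  rewrite -(ler_nat R) !natrM => le_nat.
  rewrite mulrAC ler_pdivrMr ?ltr0n // -(ler_pM2l k_gt0).
  rewrite [X in X <= _](_ : _ = #|T|%:R * (alpha * (b 0)%:R)); last by ring.
  rewrite [X in _ <= X](_ : _ = (b 0)%:R * d%:R * (Dist e u v)%:R); last by ring.
  by apply: le_trans le_nat; rewrite ler_wpM2l ?ler0n.
have [w [w' e_ww']] := exists_edge e_simple e_drg d_gt0.
have neq_ww' : w != w' by apply: contraTneq e_ww' => ->; rewrite e_simple.2.
rewrite /Dmin; apply: (big_ind (fun m : nat => alpha / d%:R * #|T|%:R <= m%:R)).
- by apply: le_trans (Dist_bound w w' neq_ww') _; rewrite ler_nat max_card.
- by move=> m n le_m le_n; rewrite /minn; case: ifP.
- by move=> [u v] /= /Dist_bound.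
Qed.
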